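(* Let $X\in\mathbb{R}^{m\times n}$, $\lambda>0$, and let $f:\mathbb{R}^{m\times n}\to\mathbb{R}$ be an arbitrary function. Consider the original R-PCA problem $$\min_{A,E\in\mathbb{R}^{m\times n}} \operatorname{rank}(A)+\lambda f(E)\quad\text{s.t.}\quad X=A+E, \tag{P}$$ and the relaxed R-LRR problem $$\min_{Z\in\mathbb{R}^{n\times n},\,E\in\mathbb{R}^{m\times n}} \|Z\|_*+\lambda f(E)\quad\text{s.t.}\quad X-E=(X-E)Z. \tag{R}$$ (i) If $(A^*,E^* )$ is any minimizer of (P), then $\big((A^* )^\dagger A^*,\,E^*\big)$ is an optimal solution of (R). (ii) Conversely, if $(Z^*,E^* )$ is a minimizer of (R), then $(X-E^*,E^* )$ is an optimal solution of (P).
   Context: $M^\dagger$ denotes the Moore–Penrose pseudo-inverse of $M$, and $\|\cdot\|_*$ denotes the nuclear norm (sum of singular values). *)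

(* Real matrices are modelled over an arbitrary real closed
   field R (rcfType); the paper's case is R = the real numbers. *)
From HB Require Import structures.
From mathcomp Require Import all_boot all_order all_algebra.
From Stdlib Require Import ClassicalEpsilon.
Set Implicit Arguments. Unset Strict Implicit. Unset Printing Implicit Defensive.
Import Order.TTheory GRing.Theory Num.Theory.
Local Open Scope ring_scope.

Section Defs.
Variable R : rcfType.

Definition orthomx (k : nat) (U : 'M[R]_k) : Prop := U *m U^T = 1%:M.

Definition is_svd (m n : nat) (A : 'M[R]_(m, n))
  (U : 'M[R]_m) (S : 'M[R]_(m, n)) (V : 'M[R]_n) : Prop :=
  orthomx U /\ orthomx V /\
  (forall (i : 'I_m) (j : 'I_n), nat_of_ord i <> nat_of_ord j -> S i j = 0) /\
  (forall (i : 'I_m) (j : 'I_n), 0 <= S i j) /\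
  A = U *m S *m V^T.

Definition is_nucnorm (m n : nat) (A : 'M[R]_(m, n)) (s : R) : Prop :=
  exists U S V, is_svd A U S V /\ s = \sum_(i < m) \sum_(j < n) S i j.

Definition nucnorm (m n : nat) (A : 'M[R]_(m, n)) : R :=
  epsilon (inhabits 0) (fun s => is_nucnorm A s).

(* Moore-Penrose conditions (real case: transpose = conjugate transpose). *)
Definition is_pinv (m n : nat) (A : 'M[R]_(m, n)) (B : 'M[R]_(n, m)) : Prop :=
  A *m B *m A = A /\ B *m A *m B = B /\
  (A *m B)^T = A *m B /\ (B *m A)^T = B *m A.

Definition pinv (m n : nat) (A : 'M[R]_(m, n)) : 'M[R]_(n, m) :=
  epsilon (inhabits 0) (fun B => is_pinv A B).

Definition rpca_opt (m n : nat) (X : 'M[R]_(m, n)) (lam : R)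
  (f : 'M[R]_(m, n) -> R) (A E : 'M[R]_(m, n)) : Prop :=
  X = A + E /\
  forall A' E' : 'M[R]_(m, n), X = A' + E' ->
    (\rank A)%:R + lam * f E <= (\rank A')%:R + lam * f E'.

Definition rlrr_opt (m n : nat) (X : 'M[R]_(m, n)) (lam : R)
  (f : 'M[R]_(m, n) -> R) (Z : 'M[R]_n) (E : 'M[R]_(m, n)) : Prop :=
  X - E = (X - E) *m Z /\
  forall (Z' : 'M[R]_n) (E' : 'M[R]_(m, n)), X - E' = (X - E') *m Z' ->
    nucnorm Z + lam * f E <= nucnorm Z' + lam * f E'.

End Defs.

From Pilot Require Import Defs.
From HB Require Import structures.
From mathcomp Require Import all_boot all_order all_algebra.
From Stdlib Require Import ClassicalEpsilon.
From mathcomp Require Import complex.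
From mathcomp Require Import ring lra.
Set Implicit Arguments. Unset Strict Implicit. Unset Printing Implicit Defensive.
Import Order.TTheory GRing.Theory Num.Theory.
Local Open Scope ring_scope.

(* If [A = A Z], the orthogonal projection [P = A^+ A] onto the row space of [A]
   satisfies [P = P Z]. Writing [Z = U diag(s) V^T] as an SVD,
   [rank A = tr P = tr (V^T P U diag(s)) <= sum s = ||Z||_*], since the diagonal
   entries of [V^T P U] are at most 1; for [Z = P] the singular values are 0 or 1
   and equality holds. So the least nuclear norm of a [Z] with
   [X - E = (X - E) Z] is [rank (X - E)], attained at [(X - E)^+ (X - E)], and
   the two problems have the same optimal value with corresponding minimizers.
   As [nucnorm] reads the singular values off an arbitrary SVD, every real square
   matrix must be shown to have one: a unit eigenvector of [Z^T Z] gives a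
   singular pair, which Householder reflections split off. *)

Section Trace.
Variable K : fieldType.

Lemma mxtrace_idem n (P : 'M[K]_n) : P *m P = P -> \tr P = (\rank P)%:R.
Proof.
move=> Pidem.
have [F' F'F] := row_fullP (col_base_full P).
have [G' GG'] := row_freeP (row_base_free P).
have F'P : F' *m P = row_base P.
  by rewrite -[X in _ *m X](mulmx_base P) mulmxA F'F mul1mx.
have PG' : P *m G' = col_base P.
  by rewrite -[X in X *m _](mulmx_base P) -mulmxA GG' mulmx1.
have GF1 : row_base P *m col_base P = 1%:M.
  by rewrite -F'P -PG' mulmxA -(mulmxA F' P P) Pidem F'P GG'.
by rewrite -[in LHS](mulmx_base P) mxtrace_mulC GF1 mxtrace1.
Qed.

End Trace.

Section RealMatrices.
Variable R : realFieldType.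

Lemma mulmx_trmx_diag_ge0 m n (M : 'M[R]_(m, n)) i : 0 <= (M *m M^T) i i.
Proof. by rewrite mxE; apply: sumr_ge0 => j _; rewrite mxE -expr2 sqr_ge0. Qed.

Lemma mulmx_trmx_eq0 m n (M : 'M[R]_(m, n)) : M *m M^T = 0 -> M = 0.
Proof.
move=> MMt0; apply/matrixP => i j; rewrite mxE.
have := congr1 (fun A : 'M_m => A i i) MMt0; rewrite !mxE => sum0.
have sq_ge0 k : true -> 0 <= M i k * M^T k i by rewrite mxE -expr2 sqr_ge0.
have := psumr_eq0P sq_ge0 sum0 (i := j) isT.
by rewrite mxE => /eqP; rewrite mulf_eq0 orbb => /eqP.
Qed.

Lemma mulmx_trmx_gt0 n (v : 'rV[R]_n) : v != 0 -> 0 < (v *m v^T) 0 0.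
Proof.
move=> v_neq0; rewrite lt_def mulmx_trmx_diag_ge0 andbT.
apply: contra v_neq0 => /eqP vv0; apply/eqP/mulmx_trmx_eq0/matrixP => i j.
by rewrite !ord1 vv0 mxE.
Qed.

Lemma mulmx_trmx_unit m n (M : 'M[R]_(m, n)) : row_free M -> M *m M^T \in unitmx.
Proof.
move=> freeM; rewrite -row_free_unit -kermx_eq0.
have KM0 : (kermx (M *m M^T) *m M) *m (kermx (M *m M^T) *m M)^T = 0.
  by rewrite trmx_mul mulmxA -(mulmxA _ M) mulmx_ker mul0mx.
by move/mulmx_trmx_eq0/eqP: KM0; rewrite mulmx_free_eq0.
Qed.

Definition orthoproj n (P : 'M[R]_n) := P^T = P /\ P *m P = P.

Lemma orthoprojC n (P : 'M[R]_n) : orthoproj P -> orthoproj (1%:M - P).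
Proof.
move=> [Psym Pidem]; split; first by rewrite linearB /= trmx1 Psym.
by rewrite mulmxBl mulmxBr !mul1mx mulmxBr mulmx1 Pidem subrr subr0.
Qed.

Lemma orthoproj_quad_ge0 n (P M : 'M[R]_n) i :
  orthoproj P -> 0 <= (M^T *m P *m M) i i.
Proof.
move=> [Psym Pidem].
have -> : M^T *m P *m M = (P *m M)^T *m (P *m M)^T^T.
  by rewrite trmxK trmx_mul Psym mulmxA -(mulmxA _ P P) Pidem.
exact: mulmx_trmx_diag_ge0.
Qed.

Lemma orthoproj_quad_le1 n (P X : 'M[R]_n) i :
  orthoproj P -> X^T *m X = 1%:M -> (X^T *m P *m X) i i <= 1.
Proof.
move=> /orthoprojC/(orthoproj_quad_ge0 X i) + XtX.
by rewrite mulmxBr mulmx1 mulmxBl XtX !mxE eqxx subr_ge0.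
Qed.

(* From [0 <= (X - Y)^T P (X - Y)] and the bounds on the two squares. *)
Lemma orthoproj_bilin_le1 n (P X Y : 'M[R]_n) i :
  orthoproj P -> X^T *m X = 1%:M -> Y^T *m Y = 1%:M -> (X^T *m P *m Y) i i <= 1.
Proof.
move=> projP XtX YtY.
have := orthoproj_quad_ge0 (X - Y) i projP.
have := orthoproj_quad_le1 i projP XtX; have := orthoproj_quad_le1 i projP YtY.
have sym : (Y^T *m P *m X) i i = (X^T *m P *m Y) i i.
  by rewrite -[Y^T *m P *m X]trmxK mxE !trmx_mul !trmxK projP.1 mulmxA.
have entryB (A B : 'M[R]_n) : (A - B) i i = A i i - B i i by rewrite !mxE.
rewrite [(X - Y)^T]linearB /= !mulmxBl !mulmxBr !entryB sym; lra.
Qed.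

End RealMatrices.

Section Orthogonal.
Variable R : rcfType.

Lemma orthomx1 n : Defs.orthomx (1%:M : 'M[R]_n).
Proof. by rewrite /Defs.orthomx trmx1 mulmx1. Qed.

Lemma orthomx_tr_mul n (U : 'M[R]_n) : Defs.orthomx U -> U^T *m U = 1%:M.
Proof. exact: mulmx1C. Qed.

Lemma orthomx_tr n (U : 'M[R]_n) : Defs.orthomx U -> Defs.orthomx U^T.
Proof. by rewrite /Defs.orthomx trmxK; apply: orthomx_tr_mul. Qed.

Lemma orthomxM n (U V : 'M[R]_n) :
  Defs.orthomx U -> Defs.orthomx V -> Defs.orthomx (U *m V).
Proof.
by rewrite /Defs.orthomx trmx_mul mulmxA -(mulmxA U) => UU VV; rewrite VV mulmx1.
Qed.

Lemma orthomx_block m n (U : 'M[R]_m) (V : 'M[R]_n) :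
  Defs.orthomx U -> Defs.orthomx V -> Defs.orthomx (block_mx U 0 0 V).
Proof.
rewrite /Defs.orthomx tr_block_mx mulmx_block !trmx0 !mulmx0 !mul0mx.
by rewrite !addr0 !add0r => -> ->; rewrite -scalar_mx_block.
Qed.

End Orthogonal.

Section PseudoInverse.
Variable R : rcfType.

Lemma is_pinv_mul m n r (F : 'M[R]_(m, r)) (G : 'M[R]_(r, n)) F' G' :
  F' *m F = 1%:M -> G *m G' = 1%:M -> (F *m F')^T = F *m F' ->
  (G' *m G)^T = G' *m G -> is_pinv (F *m G) (G' *m F').
Proof.
move=> F'F GG' FF'sym G'Gsym.
have FG_pinv : F *m G *m (G' *m F') = F *m F'.
  by rewrite -!mulmxA (mulmxA G G') GG' mul1mx.
have pinv_FG : G' *m F' *m (F *m G) = G' *m G.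
  by rewrite -!mulmxA (mulmxA F' F) F'F mul1mx.
rewrite /is_pinv FG_pinv pinv_FG; split; [|split; [|split]] => //.
  by rewrite -mulmxA (mulmxA F' F) F'F mul1mx.
by rewrite -mulmxA (mulmxA G G') GG' mul1mx.
Qed.

Lemma trmx_gram_proj m n (M : 'M[R]_(m, n)) :
  (M *m invmx (M^T *m M) *m M^T)^T = M *m invmx (M^T *m M) *m M^T.
Proof. by rewrite !trmx_mul trmxK trmx_inv trmx_mul trmxK mulmxA. Qed.

(* A rank factorization [A = F G] with [F] of full column rank and [G] of full
   row rank gives [A^+ = G^T (G G^T)^-1 (F^T F)^-1 F^T]. *)
Lemma pinv_exists m n (A : 'M[R]_(m, n)) : exists B, is_pinv A B.
Proof.
set F := col_base A; set G := row_base A.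
have GGt_unit : G *m G^T \in unitmx by apply/mulmx_trmx_unit/row_base_free.
have FtF_unit : F^T *m F \in unitmx.
  rewrite -[F in _ *m F]trmxK mulmx_trmx_unit // /row_free mxrank_tr.
  exact: col_base_full.
rewrite -(mulmx_base A) -/F -/G.
exists (G^T *m invmx (G *m G^T) *m (invmx (F^T *m F) *m F^T)).
apply: is_pinv_mul.
- by rewrite -mulmxA mulVmx.
- by rewrite mulmxA mulmxV.
- by rewrite mulmxA trmx_gram_proj.
- by have := trmx_gram_proj G^T; rewrite !trmxK.
Qed.

Lemma pinvP m n (A : 'M[R]_(m, n)) : is_pinv A (pinv A).
Proof. exact: epsilon_spec (pinv_exists A). Qed.

Lemma pinv_orthoproj m n (A : 'M[R]_(m, n)) : orthoproj (pinv A *m A).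
Proof. by have [_ [pAp [_ ?]]] := pinvP A; split=> //; rewrite mulmxA pAp. Qed.

Lemma mulmx_pinv_proj m n (A : 'M[R]_(m, n)) : A *m (pinv A *m A) = A.
Proof. by rewrite mulmxA; case: (pinvP A). Qed.

Lemma rank_pinv_proj m n (A : 'M[R]_(m, n)) : \rank (pinv A *m A) = \rank A.
Proof.
apply/eqP; rewrite eqn_leq mxrankM_maxr /=.
by rewrite -{1}(mulmx_pinv_proj A) mxrankM_maxr.
Qed.

End PseudoInverse.

Section RealSVD.
Variable R : rcfType.
Local Notation Re := (@complex.Re R).
Local Notation Im := (@complex.Im R).

Lemma Re_mul_real_mx n (w : 'rV[R[i]]_n) (A : 'M[R]_n) :
  map_mx Re (w *m map_mx (real_complex R) A) = map_mx Re w *m A.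
Proof.
apply/rowP => j; rewrite !mxE raddf_sum; apply: eq_bigr => k _.
by rewrite !mxE; case: (w 0 k) => a b; simpc.
Qed.

Lemma Im_mul_real_mx n (w : 'rV[R[i]]_n) (A : 'M[R]_n) :
  map_mx Im (w *m map_mx (real_complex R) A) = map_mx Im w *m A.
Proof.
apply/rowP => j; rewrite !mxE raddf_sum; apply: eq_bigr => k _.
by rewrite !mxE; case: (w 0 k) => a b; simpc.
Qed.

Lemma sym_real_eigenvector n (A : 'M[R]_n.+1) : A^T = A ->
  exists2 v : 'rV[R]_n.+1, v != 0 & exists a, v *m A = a *: v.
Proof.
move=> Asym.
have [z /eigenvalueP [w wA w_neq0]] :=
  eigenvalue_closed (map_mx (real_complex R) A) (ltn0Sn n).
set x := map_mx Re w; set y := map_mx Im w.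
have xA : x *m A = Re z *: x - Im z *: y.
  rewrite -Re_mul_real_mx wA; apply/rowP => j; rewrite !mxE.
  by case: (z) (w 0 j) => a b [c d]; simpc.
have yA : y *m A = Re z *: y + Im z *: x.
  rewrite -Im_mul_real_mx wA; apply/rowP => j; rewrite !mxE.
  by case: (z) (w 0 j) => a b [c d]; simpc.
have x_or_y : x != 0 \/ y != 0.
  case: (eqVneq x 0) => [x0|]; last by left.
  right; apply: contra w_neq0 => /eqP y0; apply/eqP/rowP => j.
  have := congr1 (fun u : 'rV[R]_n.+1 => u 0 j) x0.
  have := congr1 (fun u : 'rV[R]_n.+1 => u 0 j) y0.
  by rewrite !mxE; case: (w 0 j) => a b /= -> ->.
have Im_z0 : Im z = 0.
  have quad_sym : (x *m A *m y^T) 0 0 = (y *m A *m x^T) 0 0.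
    by rewrite -[y *m A *m x^T]trmxK [in RHS]mxE !trmx_mul !trmxK Asym mulmxA.
  have xy_sym : (x *m y^T) 0 0 = (y *m x^T) 0 0.
    by rewrite -[y *m x^T]trmxK [in RHS]mxE trmx_mul trmxK.
  have entryB a b (M N : 'M[R]_1) :
    (a *: M - b *: N) 0 0 = a * M 0 0 - b * N 0 0 by rewrite !mxE.
  have entryD a b (M N : 'M[R]_1) :
    (a *: M + b *: N) 0 0 = a * M 0 0 + b * N 0 0 by rewrite !mxE.
  move: quad_sym; rewrite xA yA mulmxBl mulmxDl -!scalemxAl entryB entryD xy_sym.
  have gram_gt0 : 0 < (x *m x^T) 0 0 + (y *m y^T) 0 0.
    have := mulmx_trmx_diag_ge0 x 0; have := mulmx_trmx_diag_ge0 y 0.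
    by case: x_or_y => /mulmx_trmx_gt0; lra.
  nra.
move: xA yA; rewrite Im_z0 !scale0r subr0 addr0.
by case: x_or_y => [? xA _ | ? _ yA]; [exists x | exists y] => //; exists (Re z).
Qed.

Lemma row_normalize n (v : 'rV[R]_n) : v != 0 ->
  exists2 u : 'rV[R]_n, u *m u^T = 1%:M & exists2 c, 0 < c & v = c *: u.
Proof.
move=> v_neq0; set c := Num.sqrt ((v *m v^T) 0 0).
have c_gt0 : 0 < c by rewrite sqrtr_gt0 mulmx_trmx_gt0.
exists (c^-1 *: v); last by exists c; rewrite // scalerA mulfV ?scale1r ?gt_eqF.
rewrite linearZ /= -scalemxAl -scalemxAr scalerA [v *m v^T]mx11_scalar -scalemx1.
rewrite scalerA -invfM -expr2 sqr_sqrtr ?ltW ?mulmx_trmx_gt0 //.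
by rewrite mulVf ?scale1r ?gt_eqF ?mulmx_trmx_gt0.
Qed.

Definition reflmx n (w : 'rV[R]_n) : 'M[R]_n :=
  1%:M - (2 / (w *m w^T) 0 0) *: (w^T *m w).

Lemma reflmx_orthomx n (w : 'rV[R]_n) : w != 0 -> Defs.orthomx (reflmx w).
Proof.
move=> /mulmx_trmx_gt0 ww_gt0; set c := (w *m w^T) 0 0 in ww_gt0 *.
have WW : (w^T *m w) *m (w^T *m w) = c *: (w^T *m w).
  by rewrite mulmxA -(mulmxA w^T) [w *m w^T]mx11_scalar mul_mx_scalar -scalemxAl.
rewrite /Defs.orthomx /reflmx -/c linearB /= trmx1 [(_ *: _)^T]linearZ /=.
rewrite trmx_mul trmxK mulmxBl mul1mx mulmxBr mulmx1 -scalemxAl -scalemxAr WW.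
rewrite !scalerA -scalerBl.
have -> : 2 / c - 2 / c * (2 / c) * c = - (2 / c) by field; rewrite gt_eqF.
by rewrite scaleNr opprK subrK.
Qed.

Lemma reflmx_unit_row n (x y : 'rV[R]_n) :
  x *m x^T = 1%:M -> y *m y^T = 1%:M -> x != y -> y *m reflmx (x - y) = x.
Proof.
move=> xx yy x_neq_y.
have ww_gt0 : 0 < ((x - y) *m (x - y)^T) 0 0 by rewrite mulmx_trmx_gt0 ?subr_eq0.
have xy_sym : (x *m y^T) 0 0 = (y *m x^T) 0 0.
  by rewrite -[y *m x^T]trmxK [in RHS]mxE trmx_mul trmxK.
have entryB (M N : 'M[R]_1) : (M - N) 0 0 = M 0 0 - N 0 0 by rewrite !mxE.
have ww : ((x - y) *m (x - y)^T) 0 0 = 2 - 2 * (y *m x^T) 0 0.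
  rewrite linearB /= mulmxBl !mulmxBr !entryB xx yy xy_sym !mxE /=; ring.
have yw : (y *m (x - y)^T) 0 0 = (y *m x^T) 0 0 - 1.
  by rewrite linearB /= mulmxBr entryB yy [_%:M _ _]mxE.
rewrite /reflmx mulmxBr mulmx1 -scalemxAr mulmxA [y *m (x - y)^T]mx11_scalar.
rewrite mul_scalar_mx scalerA yw ww; rewrite ww in ww_gt0.
have -> : 2 / (2 - 2 * (y *m x^T) 0 0) * ((y *m x^T) 0 0 - 1) = -1.
  by field; rewrite gt_eqF.
by rewrite scaleN1r opprK addrC subrK.
Qed.

Lemma unit_row_orthomx_completion n (x : 'rV[R]_(1 + n)) : x *m x^T = 1%:M ->
  exists H : 'M[R]_(n, 1 + n), Defs.orthomx (col_mx x H).
Proof.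
move=> xx; set e : 'rV[R]_(1 + n) := row_mx 1%:M 0.
have ee : e *m e^T = 1%:M.
  by rewrite tr_row_mx mul_row_col trmx1 mulmx1 trmx0 mulmx0 addr0.
suff [Q oQ eQ] : exists2 Q, Defs.orthomx Q & e *m Q = x.
  exists (dsubmx Q); rewrite -eQ.
  suff -> : e *m Q = usubmx Q by rewrite vsubmxK.
  by rewrite -{1}[Q]vsubmxK mul_row_col mul1mx mul0mx addr0.
have [<-|x_neq_e] := eqVneq x e.
  by exists 1%:M; rewrite ?mulmx1 // /Defs.orthomx trmx1 mulmx1.
exists (reflmx (x - e)); last exact: reflmx_unit_row.
by apply: reflmx_orthomx; rewrite subr_eq0.
Qed.

Lemma singular_pair n (Z : 'M[R]_n.+1) : exists (x u : 'rV[R]_n.+1) s,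
  [/\ x *m x^T = 1%:M, u *m u^T = 1%:M, 0 <= s, u *m Z = s *: x
    & Z *m x^T = s *: u^T].
Proof.
have ZtZ_sym : (Z^T *m Z)^T = Z^T *m Z by rewrite trmx_mul trmxK.
have [v v_neq0 [d vZtZ]] := sym_real_eigenvector ZtZ_sym.
have [x xx [c c_gt0 vE]] := row_normalize v_neq0.
have xZtZ : x *m (Z^T *m Z) = d *: x.
  apply: (scalerI (lt0r_neq0 c_gt0)).
  by rewrite scalemxAl -vE vZtZ vE !scalerA mulrC.
have [Zx0|Zx_neq0] := eqVneq (Z *m x^T) 0.
  have Z_sing : Z \notin unitmx.
    apply/negP => Z_unit.
    have x0 : x = 0.
      by apply: trmx_inj; rewrite trmx0 -(mulKmx Z_unit x^T) Zx0 mulmx0.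
    move: xx; rewrite x0 mul0mx => /matrixP/(_ 0 0).
    by rewrite !mxE eqxx /= mulr1n => /eqP; rewrite eq_sym oner_eq0.
  have : eigenvalue Z 0.
    by rewrite /eigenvalue /eigenspace raddf0 subr0 kermx_eq0 row_free_unit.
  case/eigenvalueP => w wZ w_neq0.
  have [u uu [c' c'_gt0 wE]] := row_normalize w_neq0.
  exists x, u, 0; split; rewrite ?scale0r ?Zx0 //.
  apply: (scalerI (lt0r_neq0 c'_gt0)).
  by rewrite scalemxAl -wE wZ !scale0r scaler0.
have y_neq0 : x *m Z^T != 0 by rewrite -trmx_eq0 trmx_mul trmxK.
have [u uu [s s_gt0 yE]] := row_normalize y_neq0.
have d_ss : d = s * s.
  have := congr1 (fun M : 'M_1 => M 0 0) (congr1 (fun y => y *m y^T) yE).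
  rewrite /= [in LHS]trmx_mul trmxK mulmxA -(mulmxA x) xZtZ -scalemxAl xx.
  rewrite [(s *: u)^T]linearZ /= -scalemxAl -scalemxAr uu scalerA.
  by rewrite !mxE eqxx mulr1n !mulr1.
exists x, u, s; split=> //; first exact: ltW.
  apply: (scalerI (lt0r_neq0 s_gt0)).
  by rewrite scalemxAl -yE -mulmxA xZtZ d_ss scalerA.
by rewrite -[Z *m x^T]trmxK trmx_mul trmxK yE linearZ.
Qed.

Lemma orthomx_col_mx n (x : 'rV[R]_(1 + n)) (H : 'M[R]_(n, 1 + n)) :
  Defs.orthomx (col_mx x H) -> x *m H^T = 0 /\ H *m x^T = 0.
Proof.
rewrite /Defs.orthomx tr_col_mx mul_col_row (@scalar_mx_block _ 1 n 1).
by case/eq_block_mx.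
Qed.

(* Induction on the size: a singular pair [(x, u, s)] and orthogonal completions
   of [x] and [u] reduce [Z] to the block matrix [diag(s, Z')]. *)
Lemma svd_exists n (Z : 'M[R]_n) : exists U V (d : 'rV[R]_n),
  [/\ Defs.orthomx U, Defs.orthomx V, forall i, 0 <= d 0 i
    & Z = U *m diag_mx d *m V^T].
Proof.
elim: n Z => [|n IHn] Z.
  exists 1%:M, 1%:M, 0; split; try exact: orthomx1; first by case.
  by apply/matrixP => -[].
have [x [u [s [xx uu s_ge0 uZ Zx]]]] := singular_pair Z.
have [H1 oH1] := unit_row_orthomx_completion xx.
have [H2 oH2] := unit_row_orthomx_completion uu.
have [xH1 _] := orthomx_col_mx oH1; have [_ H2u] := orthomx_col_mx oH2.
set Q1 := col_mx x H1; set Q2 := col_mx u H2.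
have [U' [V' [d' [oU' oV' d'_ge0 Z'E]]]] := IHn (H2 *m Z *m H1^T).
have Q2ZQ1 : Q2 *m Z *m Q1^T = block_mx s%:M 0 0 (H2 *m Z *m H1^T).
  rewrite mul_col_mx tr_col_mx mul_col_row uZ -!scalemxAl xx scalemx1 xH1.
  by rewrite -mulmxA Zx -scalemxAr H2u !scaler0.
pose BU : 'M[R]_(1 + n) := block_mx 1%:M 0 0 U'.
pose BV : 'M[R]_(1 + n) := block_mx 1%:M 0 0 V'.
have BdB : BU *m diag_mx (row_mx (const_mx s) d') *m BV^T =
           block_mx s%:M 0 0 (H2 *m Z *m H1^T).
  rewrite diag_mx_row diag_const_mx tr_block_mx !trmx0 trmx1 !mulmx_block.
  by rewrite !mulmx0 !mul0mx !mulmx1 !mul1mx !addr0 !add0r mul0mx Z'E.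
exists (Q2^T *m BU), (Q1^T *m BV), (row_mx (const_mx s : 'rV_1) d'); split.
- exact: orthomxM (orthomx_tr oH2) (orthomx_block (@orthomx1 R 1) oU').
- exact: orthomxM (orthomx_tr oH1) (orthomx_block (@orthomx1 R 1) oV').
- move=> i; rewrite mxE; case: splitP => j _; [by rewrite mxE | exact: d'_ge0].
rewrite (trmx_mul Q1^T BV) trmxK.
have -> : Q2^T *m BU *m diag_mx (row_mx (const_mx s) d') *m (BV^T *m Q1) =
          Q2^T *m (BU *m diag_mx (row_mx (const_mx s) d') *m BV^T) *m Q1.
  by rewrite !mulmxA.
rewrite BdB -Q2ZQ1 !mulmxA (orthomx_tr_mul oH2) mul1mx.
by rewrite -mulmxA (orthomx_tr_mul oH1) mulmx1.
Qed.

End RealSVD.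

Section NuclearNorm.
Variable R : rcfType.

Lemma sum_diag_mx n (d : 'rV[R]_n) : \sum_i \sum_j diag_mx d i j = \sum_i d 0 i.
Proof.
apply: eq_bigr => i _; rewrite (bigD1 i) //= big1 => [|j ji]; rewrite mxE.
  by rewrite eqxx mulr1n addr0.
by rewrite eq_sym (negPf ji) mulr0n.
Qed.

Lemma is_svd_diag n (Z U S V : 'M[R]_n) :
  is_svd Z U S V -> S = diag_mx (\row_i S i i).
Proof.
case=> _ [_ [Sdiag _]]; apply/matrixP => i j; rewrite !mxE.
have [<-|ij] := eqVneq i j; first by rewrite mulr1n.
by rewrite mulr0n Sdiag // => /val_inj/eqP; rewrite (negPf ij).
Qed.

Lemma nucnormP n (Z : 'M[R]_n) : exists U V (d : 'rV[R]_n),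
  [/\ Defs.orthomx U, Defs.orthomx V, forall i, 0 <= d 0 i,
      Z = U *m diag_mx d *m V^T & nucnorm Z = \sum_i d 0 i].
Proof.
have [U [V [d [oU oV d_ge0 ZE]]]] := svd_exists Z.
have : exists s, is_nucnorm Z s.
  exists (\sum_i \sum_j diag_mx d i j), U, (diag_mx d), V.
  split=> //; split=> //; split=> //; split; [|split=> //].
    by move=> i j ij; rewrite mxE; case: eqP => // /(congr1 val).
  by move=> i j; rewrite mxE mulrn_wge0.
move=> /(epsilon_spec (inhabits 0)); rewrite -/(nucnorm Z).
move=> [U' [S [V' [svdZ ->]]]]; exists U', V', (\row_i S i i).
case: (svdZ) => [oU' [oV' [_ [S_ge0 ZE']]]].
split=> //; first by move=> i; rewrite mxE.
  by rewrite -(is_svd_diag svdZ).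
by rewrite {1}(is_svd_diag svdZ) sum_diag_mx.
Qed.

Lemma orthoproj_trace_le n (P Z U V : 'M[R]_n) (d : 'rV[R]_n) :
  orthoproj P -> P = P *m Z -> Defs.orthomx U -> Defs.orthomx V ->
  (forall i, 0 <= d 0 i) -> Z = U *m diag_mx d *m V^T -> \tr P <= \sum_i d 0 i.
Proof.
move=> projP PZ oU oV d_ge0 ZE.
have -> : \tr P = \sum_i (V^T *m P *m U) i i * d 0 i.
  rewrite {1}PZ ZE !mulmxA mxtrace_mulC !mulmxA mul_mx_diag.
  by apply: eq_bigr => i _; rewrite mxE.
apply: ler_sum => i _; apply: ler_piMl => //.
exact: orthoproj_bilin_le1 (orthomx_tr_mul oV) (orthomx_tr_mul oU).
Qed.

(* The singular values of an orthogonal projection are all 0 or 1. *)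
Lemma orthoproj_svd_sum n (P U V : 'M[R]_n) (d : 'rV[R]_n) :
  orthoproj P -> Defs.orthomx U -> Defs.orthomx V -> (forall i, 0 <= d 0 i) ->
  P = U *m diag_mx d *m V^T -> \sum_i d 0 i = \tr P.
Proof.
move=> [Psym Pidem] oU oV d_ge0 PE.
set D2 := diag_mx (\row_i (d 0 i * d 0 i)).
have PD2 : P = V *m D2 *m V^T.
  rewrite -{1}Pidem -{1}Psym {1 2}PE !trmx_mul !trmxK tr_diag_mx !mulmxA.
  rewrite -(mulmxA _ U^T U) orthomx_tr_mul // mulmx1.
  by rewrite -(mulmxA _ _ (diag_mx d)) mulmx_diag.
have D2E : D2 = V^T *m P *m V.
  rewrite PD2 !mulmxA orthomx_tr_mul // mul1mx.
  by rewrite -mulmxA orthomx_tr_mul // mulmx1.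
have D2idem : D2 *m D2 = D2.
  rewrite D2E -mulmxA !mulmxA -(mulmxA _ V V^T) oV mulmx1.
  by rewrite -(mulmxA _ P P) Pidem.
have d_idem i : d 0 i * d 0 i = d 0 i.
  have := congr1 (fun M : 'M[R]_n => M i i) D2idem.
  rewrite /= mulmx_diag !mxE eqxx /= mulr1n => d4.
  have := d_ge0 i; nra.
rewrite PD2 mxtrace_mulC mulmxA orthomx_tr_mul // mul1mx mxtrace_diag.
by apply: eq_bigr => i _; rewrite mxE d_idem.
Qed.

Lemma rank_le_nucnorm m n (A : 'M[R]_(m, n)) (Z : 'M[R]_n) :
  A = A *m Z -> (\rank A)%:R <= nucnorm Z.
Proof.
move=> AZ; have [U [V [d [oU oV d_ge0 ZE ->]]]] := nucnormP Z.
rewrite -rank_pinv_proj -mxtrace_idem; last by case: (pinv_orthoproj A).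
apply: orthoproj_trace_le (pinv_orthoproj A) _ oU oV d_ge0 ZE.
by rewrite -mulmxA -AZ.
Qed.

Lemma nucnorm_pinv_proj m n (A : 'M[R]_(m, n)) :
  nucnorm (pinv A *m A) = (\rank A)%:R.
Proof.
have [U [V [d [oU oV d_ge0 PE ->]]]] := nucnormP (pinv A *m A).
have [_ Pidem] := pinv_orthoproj A.
by rewrite (orthoproj_svd_sum (pinv_orthoproj A) oU oV d_ge0 PE) mxtrace_idem
  // rank_pinv_proj.
Qed.

End NuclearNorm.

Theorem theorem2 (R : rcfType) (m n : nat) (X : 'M[R]_(m, n)) (lam : R)
  (f : 'M[R]_(m, n) -> R) (hlam : 0 < lam) :
  (forall A E : 'M[R]_(m, n),
     rpca_opt X lam f A E -> rlrr_opt X lam f (pinv A *m A) E) /\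
  (forall (Z : 'M[R]_n) (E : 'M[R]_(m, n)),
     rlrr_opt X lam f Z E -> rpca_opt X lam f (X - E) E).
Proof.
split=> [A E [XAE A_opt] | Z E [XEZ Z_opt]].
- split; first by rewrite XAE addrK mulmx_pinv_proj.
  move=> Z' E' XE'Z'; rewrite nucnorm_pinv_proj.
  have := A_opt (X - E') E' (esym (subrK E' X)).
  have := rank_le_nucnorm XE'Z'; lra.
- split=> [|A' E' XA'E']; first by rewrite subrK.
  have XE'P : X - E' = (X - E') *m (pinv A' *m A').
    by rewrite XA'E' addrK mulmx_pinv_proj.
  have := Z_opt _ _ XE'P; rewrite nucnorm_pinv_proj.
  have := rank_le_nucnorm XEZ; lra.
Qed.
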